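(* Let $n$ be a positive integer, $q=2^n$, $a_1\in\mathbb{F}_q^{*}$ and $b\in\mathbb{F}_{q^2}^{*}$. Define the Boolean function $h_1:\mathbb{F}_{q^2}\to\mathbb{F}_2$ by $h_1(x)=\mathrm{Tr}_1^{2n}\!\left(\frac{a_1}{x^{q-1}+b}\right)$. Then $h_1$ is bent if and only if one of the following conditions holds: (1) $b\in U\setminus\{1\}$ and $\mathrm{Tr}_1^{2n}\!\left(\frac{a_1}{b}\right)=0$; (2) $b\in\mathbb{F}_{q^2}^{*}\setminus U$, $\mathcal{K}_n\!\left(\frac{a_1}{1+b\overline{b}}\right)=0$ and $\mathrm{Tr}_1^{n}\!\left(\frac{a_1(b+\overline{b})}{(1+b\overline{b})\,b\overline{b}}\right)=0$.
   Context: For $k\mid m$, $\mathrm{Tr}_k^{m}(x)=x+x^{2^k}+\cdots+x^{2^{(m/k-1)k}}$ is the trace from $\mathbb{F}_{2^m}$ to $\mathbb{F}_{2^k}$. For $x\in\mathbb{F}_{q^2}$ ($q=2^n$) write $\overline{x}=x^{q}$. The unit circle is $U=\{\eta\in\mathbb{F}_{q^2}:\eta^{q+1}=1\}$. Division by zero is interpreted with the convention $\frac{1}{0}=0$ (i.e. $z^{-1}$ means $z^{q^2-2}$). The binary Kloosterman sum is $\mathcal{K}_n(a)=\sum_{x\in\mathbb{F}_{2^n}}(-1)^{\mathrm{Tr}_1^n(\frac1x+ax)}$ (with $\frac10=0$). A Boolean function $f:\mathbb{F}_{2^{m}}\to\mathbb{F}_2$ is bent if its Walsh transform $W_f(\omega)=\sum_{x\in\mathbb{F}_{2^m}}(-1)^{f(x)+\mathrm{Tr}_1^m(\omega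 x)}$ satisfies $W_f(\omega)^2=2^m$ for all $\omega\in\mathbb{F}_{2^m}$. *)

From HB Require Import structures.
From mathcomp Require Import all_boot all_order all_algebra all_field.
Set Implicit Arguments. Unset Strict Implicit. Unset Printing Implicit Defensive.
Import GRing.Theory.
Local Open Scope ring_scope.

(* Absolute trace Tr_1^m(x) = x + x^2 + ... + x^(2^(m-1)), computed inside a
   field F of characteristic 2 (meaningful for x in the subfield F_{2^m}). *)
Definition Tr1 (F : fieldType) (m : nat) (x : F) : F :=
  \sum_(i < m) x ^+ (2 ^ i).

Definition sgnF (F : fieldType) (t : F) : int := if t == 0 then 1 else -1.

(* Walsh transform of f : F_{2^m} -> F_2 (values 0/1 seen in F). *)
Definition walsh (F : finFieldType) (m : nat) (f : F -> F) (w : F) : int :=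
  \sum_(x : F) sgnF (f x + Tr1 m (w * x)).

Definition bent (F : finFieldType) (m : nat) (f : F -> F) : Prop :=
  forall w : F, walsh m f w ^+ 2 = (2 ^ m)%:Z.

(* Binary Kloosterman sum K_n(a) over the subfield F_{2^n} = {x | x^(2^n) = x}
   of F; x^-1 is mathcomp's inverse, with 0^-1 = 0. *)
Definition kloosterman (F : finFieldType) (n : nat) (a : F) : int :=
  \sum_(x : F | x ^+ (2 ^ n) == x) sgnF (Tr1 n (x^-1 + a * x)).

From HB Require Import structures.
From mathcomp Require Import all_boot all_order all_algebra all_field.
From mathcomp Require Import ring zify.
Set Implicit Arguments. Unset Strict Implicit. Unset Printing Implicit Defensive.
Import GRing.Theory Num.Theory.
Local Open Scope ring_scope.

(* Write h1 x = G (x ^ (q - 1)) with G u = Tr (a1 / (u + b)).  The map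
   x |-> x ^ (q - 1) sends F^* onto the unit circle U, its fibres being the
   cosets of F_q^*, so every Walsh coefficient of h1 is a combination of
   additive character sums over F_q; for q > 2 this makes h1 bent exactly when
   S := sum_(u in U) (-1)^(G u) equals (-1)^(G 0).
   If b is in U and b <> 1, an involution of U \ {b} changing the sign of
   (-1)^G shows S = 1.  If b = 1, G is constant on U \ {1} and h1 is never
   bent.  If b is not in U, the Moebius map v |-> (1 + b bbar) / (v + bbar) + b
   permutes U and turns S into +-sum_(v in U) (-1)^Tr(a v), a = a1 / (1 + b bbar);
   counting the v in U with v + vbar = x rewrites this sum as 1 - K_n(a), and
   since K_n(a) = 0 mod 4 the condition S = (-1)^(G 0) leaves K_n(a) = 0 and the
   stated trace condition. *)

Lemma sum_involution_opp (T : finType) (A : {pred T}) (s : T -> T) (g : T -> int) :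
  involutive s -> {homo s : x / x \in A} -> {in A, forall x, g (s x) = - g x} ->
  \sum_(x in A) g x = 0.
Proof.
move=> sK sA gs; have sAE x : (s x \in A) = (x \in A).
  by apply/idP/idP => [/sA|/sA //]; rewrite sK.
suff : \sum_(x in A) g x = - \sum_(x in A) g x by lia.
rewrite [LHS](reindex_inj (can_inj sK)) -sumrN /=.
by apply: eq_big => [x | x]; rewrite sAE //; apply: gs.
Qed.

Lemma sqrrD_eq_sqr (R : idomainType) (d c : R) :
  (d + c) ^+ 2 = c ^+ 2 -> d = 0 \/ d = - (2 * c).
Proof.
move=> dc; have /eqP : d * (d + 2 * c) = 0 by rewrite -(subrr (c ^+ 2)) -{1}dc; ring.
by rewrite mulf_eq0 addr_eq0 => /orP[] /eqP; [left | right].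
Qed.

Lemma sqrf_eq_id (R : idomainType) (x : R) : x ^+ 2 = x -> x = 0 \/ x = 1.
Proof.
move=> xx; have /eqP : x * (x - 1) = 0 by rewrite mulrBr mulr1 -expr2 xx subrr.
by rewrite mulf_eq0 subr_eq0 => /orP[] /eqP; [left | right].
Qed.

Lemma moebius_norm_sub1 (K : fieldType) (b c v w : K) : v - c != 0 -> w - b != 0 ->
  ((b * c - 1) / (w - b) + c) * ((b * c - 1) / (v - c) + b) - 1 =
  (b * c - 1) * (w * v - 1) / ((v - c) * (w - b)).
Proof. by move=> vc wb; field; rewrite vc wb. Qed.

Lemma Tr10 {F : fieldType} m : Tr1 m (0 : F) = 0.
Proof. by rewrite /Tr1 big1 // => i _; rewrite expr0n expn_eq0. Qed.

Lemma sgnF0 {F : fieldType} : sgnF (0 : F) = 1.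
Proof. by rewrite /sgnF eqxx. Qed.

Lemma sgnF1 {F : fieldType} : sgnF (1 : F) = -1.
Proof. by rewrite /sgnF oner_eq0. Qed.

Lemma sgnF_pm {F : fieldType} (t : F) : sgnF t = 1 \/ sgnF t = -1.
Proof. by rewrite /sgnF; case: ifP; [left | right]. Qed.

Lemma sgnF_eq1 {F : fieldType} (t : F) : (sgnF t == 1) = (t == 0).
Proof. by rewrite /sgnF; case: ifP. Qed.

Section Char2.
Variable F : fieldType.
Hypothesis pcharF : (2 \in [pchar F])%N.

Lemma exprD_pchar2 k (x y : F) : (x + y) ^+ (2 ^ k) = x ^+ (2 ^ k) + y ^+ (2 ^ k).
Proof. by apply: exprDn_pchar; rewrite pnatX pnatE // pcharF. Qed.

Lemma sqrD_pchar2 (x y : F) : (x + y) ^+ 2 = x ^+ 2 + y ^+ 2.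
Proof. exact: (exprD_pchar2 1). Qed.

Lemma Tr1D m : {morph @Tr1 F m : x y / x + y}.
Proof.
by move=> x y; rewrite /Tr1 -big_split; apply: eq_bigr => i _; rewrite exprD_pchar2.
Qed.

Lemma Tr1_sqr m (x : F) : Tr1 m x ^+ 2 = Tr1 m (x ^+ 2).
Proof.
rewrite /Tr1 -(pFrobenius_autE pcharF) rmorph_sum /=.
by apply: eq_bigr => i _; rewrite pFrobenius_autE -!exprM mulnC.
Qed.

Lemma Tr1_sqrD m (x : F) : Tr1 m (x ^+ 2) + x = Tr1 m x + x ^+ (2 ^ m).
Proof.
rewrite /Tr1 -(big_ord_recr m (fun i => x ^+ (2 ^ i))) big_ord_recl /= expn0 expr1 addrC.
by congr (_ + _); apply: eq_bigr => i _; rewrite -exprM -expnS.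
Qed.

Lemma Tr1_sqr_addr m (w : F) : Tr1 m (w ^+ 2 + w) = w ^+ (2 ^ m) + w.
Proof.
have -> : Tr1 m (w ^+ 2 + w) = Tr1 m w + w ^+ (2 ^ m) + w + Tr1 m w.
  by rewrite -Tr1_sqrD addrK_pchar2 // Tr1D.
by rewrite [LHS]addrC !addrA addrr_pchar2 // add0r.
Qed.

Lemma Tr1_bit m (x : F) : x ^+ (2 ^ m) = x -> Tr1 m x = 0 \/ Tr1 m x = 1.
Proof.
move=> xE; apply: sqrf_eq_id.
by apply: (addIr x); rewrite Tr1_sqr Tr1_sqrD xE.
Qed.

Lemma Tr1_double m (x : F) : Tr1 (2 * m) x = Tr1 m (x + x ^+ (2 ^ m)).
Proof.
rewrite Tr1D /Tr1 mul2n -addnn big_split_ord /=; congr (_ + _).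
by apply: eq_bigr => i _; rewrite -exprM -expnD addnC.
Qed.

Lemma sgnFD (s t : F) : s = 0 \/ s = 1 -> t = 0 \/ t = 1 ->
  sgnF (s + t) = sgnF s * sgnF t.
Proof.
by move=> [] -> [] ->; rewrite ?addr0 ?add0r ?addrr_pchar2 ?sgnF0 ?sgnF1.
Qed.

End Char2.

Section QuadraticExtension.
Variables (F : finFieldType) (n : nat).
Hypotheses (n_gt0 : (0 < n)%N) (cardF : #|F| = (2 ^ (2 * n))%N).
Local Notation q := (2 ^ n)%N.

Lemma pchar2 : (2 \in [pchar F])%N.
Proof. exact: card_finPcharP cardF _. Qed.

Lemma two_eq0 : 2%:R = 0 :> F.
Proof. exact: pcharf0 pchar2. Qed.

Lemma q_gt1 : (1 < q)%N.
Proof. by rewrite -{1}(expn0 2) ltn_exp2l. Qed.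

Lemma card_sqr : #|F| = (q * q)%N.
Proof. by rewrite cardF -expnD addnn -mul2n. Qed.

Lemma conjK (x : F) : x ^+ q ^+ q = x.
Proof. by rewrite -exprM -card_sqr expf_card. Qed.

Lemma conjD (x y : F) : (x + y) ^+ q = x ^+ q + y ^+ q.
Proof. exact: (exprD_pchar2 pchar2). Qed.

Lemma exprq_pred (x : F) : x ^+ (q - 1) * x = x ^+ q.
Proof. by rewrite -exprSr subn1 prednK ?expn_gt0. Qed.

Lemma Tr1_double_bit (x : F) : Tr1 (2 * n) x = 0 \/ Tr1 (2 * n) x = 1.
Proof. by apply: Tr1_bit; first exact: pchar2; rewrite -cardF expf_card. Qed.

Definition Fq : {pred F} := [pred x | x ^+ q == x].
Definition circle : {pred F} := [pred u | u ^+ q.+1 == 1].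

Local Notation Fqx := [predD1 Fq & (0 : F)].

Lemma memFq x : (x \in Fq) = (x ^+ q == x). Proof. by []. Qed.
Lemma mem_circle u : (u \in circle) = (u ^+ q.+1 == 1). Proof. by []. Qed.

Fact Fq_divring_closed : divring_closed Fq.
Proof.
split; rewrite ?memFq ?expr1n // => x y; rewrite !memFq => /eqP xq /eqP yq.
  by rewrite !(oppr_pchar2 pchar2) conjD xq yq.
by rewrite exprMn exprVn xq yq.
Qed.
HB.instance Definition _ := GRing.isDivringClosed.Build F Fq Fq_divring_closed.

Fact circle_divr_closed : divr_closed circle.
Proof.
split; rewrite ?mem_circle ?expr1n // => x y; rewrite !mem_circle => /eqP xq /eqP yq.
by rewrite exprMn exprVn xq yq invr1 mulr1.
Qed.
HB.instance Definition _ := GRing.isDivClosed.Build F circle circle_divr_closed.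

Lemma Fq_trace (x : F) : x + x ^+ q \in Fq.
Proof. by rewrite memFq conjD conjK addrC. Qed.

Lemma Fq_norm (x : F) : x * x ^+ q \in Fq.
Proof. by rewrite memFq exprMn conjK mulrC. Qed.

Lemma Fq_Tr1_bit y : y \in Fq -> Tr1 n y = 0 \/ Tr1 n y = 1.
Proof. by move=> /eqP; apply: (Tr1_bit pchar2). Qed.

Lemma circle_neq0 u : u \in circle -> u != 0.
Proof. by rewrite mem_circle; apply: contraL => /eqP->; rewrite expr0n /= eq_sym oner_eq0. Qed.

Lemma circle_conj u : u \in circle -> u ^+ q = u^-1.
Proof.
move=> uU; have u0 := circle_neq0 uU.
by move: uU; rewrite mem_circle exprSr => /eqP uqu; rewrite -[LHS](mulfK u0) uqu mul1r.
Qed.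

Lemma circle_Fq u : u \in circle -> u \in Fq -> u = 1.
Proof.
rewrite mem_circle memFq exprSr => /eqP uqu /eqP uq.
have /eqP : (u + 1) ^+ 2 = 0.
  by rewrite sqrD_pchar2 ?pchar2 // expr1n expr2 -{1}uq uqu addrr_pchar2 ?pchar2.
by rewrite expf_eq0 /= addr_eq0 (oppr_pchar2 pchar2) => /eqP.
Qed.

Lemma circle_conjq (x : F) : (x ^+ q \in circle) = (x \in circle).
Proof.
rewrite !mem_circle -exprM mulnC exprM; apply/eqP/eqP => [|->]; last by rewrite expr1n.
by move=> /(congr1 (fun y => y ^+ q)); rewrite conjK expr1n.
Qed.

Lemma expf_card_pred (x : F) : x != 0 -> x ^+ (q * q).-1 = 1.
Proof.
move=> x0; apply: (mulIf x0).
by rewrite mul1r -exprSr prednK ?muln_gt0 ?expn_gt0 // -card_sqr expf_card.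
Qed.

Lemma circle_expr_pred (x : F) : x != 0 -> x ^+ (q - 1) \in circle.
Proof.
move=> x0; rewrite mem_circle -exprM.
have -> : ((q - 1) * q.+1 = (q * q).-1)%N by have := q_gt1; nia.
by rewrite expf_card_pred.
Qed.

(* Hilbert 90 for the unit circle, with the explicit witness 1 + u^-1. *)
Lemma circle_Hilbert90 u : u \in circle -> exists2 x, x != 0 & x ^+ (q - 1) = u.
Proof.
move=> uU; have [->|u1] := eqVneq u 1; first by exists 1; rewrite ?oner_eq0 ?expr1n.
have u0 := circle_neq0 uU.
have x0 : 1 + u^-1 != 0 by rewrite addr_eq0 (oppr_pchar2 pchar2) eq_sym invr_eq1.
exists (1 + u^-1) => //; apply: (mulIf x0).
by rewrite exprq_pred conjD expr1n exprVn (circle_conj uU) invrK mulrDr mulr1 mulfV // addrC.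
Qed.

Lemma trace_div_circle b u : b \in circle -> u \in circle -> u != b ->
  b / (u + b) + (b / (u + b)) ^+ q = 1.
Proof.
move=> bU uU ub; have [b0 u0] := (circle_neq0 bU, circle_neq0 uU).
have ub0 : u + b != 0 by rewrite addr_eq0 (oppr_pchar2 pchar2).
rewrite exprMn exprVn conjD !circle_conj //.
by field; rewrite b0 u0 addrC ub0.
Qed.

Lemma trace1_inv_circle b z : b \in circle -> b * z + (b * z) ^+ q = 1 -> z^-1 + b \in circle.
Proof.
move=> bU bz; have b0 := circle_neq0 bU.
have z0 : z != 0.
  by apply: contra_eq_neq bz => ->; rewrite mulr0 expr0n expn_eq0 add0r eq_sym oner_eq0.
have zq_def : z ^+ q = b * (1 + b * z).
  move: bz; rewrite exprMn (circle_conj bU) => bz.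
  by rewrite -[in RHS](oppr_pchar2 pchar2 (b * z)) -bz; field.
rewrite mem_circle exprSr conjD exprVn zq_def (circle_conj bU).
have bz0 : 1 + b * z != 0.
  by apply: contraNneq (expf_neq0 q z0); rewrite zq_def => ->; rewrite mulr0.
by apply/eqP; field: two_eq0; rewrite b0 z0 bz0.
Qed.

Lemma fiber_mul (x0 y : F) : x0 != 0 ->
  (x0 * y != 0) && ((x0 * y) ^+ (q - 1) == x0 ^+ (q - 1)) = (y \in Fqx).
Proof.
move=> x00; rewrite inE memFq mulf_eq0 negb_or x00 /=.
have [->|y0] := eqVneq y 0; first by [].
rewrite exprMn -[X in _ == X]mulr1 (inj_eq (mulfI (expf_neq0 _ x00))).
by rewrite -exprq_pred -[X in _ * _ == X]mul1r (inj_eq (mulIf y0)).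
Qed.

Lemma card_fiber u : u \in circle ->
  #|[pred x : F | (x != 0) && (x ^+ (q - 1) == u)]| = #|Fqx|.
Proof.
case/circle_Hilbert90 => x0 x00 <-.
rewrite -!sum1_card (reindex_inj (mulfI x00)) /=.
by apply: eq_bigl => y; rewrite inE fiber_mul.
Qed.

Lemma card_circle_mul : (#|circle| * #|Fqx| = (q * q).-1)%N.
Proof.
rewrite -card_sqr -(cardC1 (0 : F)); apply/esym; rewrite -sum1_card.
rewrite (partition_big (fun x => x ^+ (q - 1)) (mem circle)) /=; last first.
  by move=> x; rewrite !inE; apply: circle_expr_pred.
rewrite -sum_nat_const; apply: eq_bigr => u uU.
by rewrite -(card_fiber uU) -sum1_card; apply: eq_bigl => x; rewrite !inE.
Qed.

Lemma card_Fqx_le : (#|Fqx| <= q - 1)%N.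
Proof.
rewrite cardE; apply: max_unity_roots; [by rewrite subn_gt0 q_gt1 | | exact: enum_uniq].
apply/allP => x; rewrite mem_enum !inE unity_rootE => /andP[x0 /eqP xq].
by apply/eqP/(mulIf x0); rewrite exprq_pred xq mul1r.
Qed.

Lemma card_circle_le : (#|circle| <= q.+1)%N.
Proof.
rewrite cardE; apply: max_unity_roots => //; last exact: enum_uniq.
by apply/allP => u; rewrite mem_enum unity_rootE.
Qed.

Lemma card_circle_Fqx : #|circle| = q.+1 /\ #|Fqx| = (q - 1)%N.
Proof.
have := card_circle_mul; have := card_circle_le; have := card_Fqx_le; have := q_gt1.
nia.
Qed.

Lemma card_circle : #|circle| = q.+1.
Proof. by case: card_circle_Fqx. Qed.

Lemma card_Fq : #|Fq| = q.
Proof.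
by rewrite (cardD1 (0 : F)) rpred0 (proj2 card_circle_Fqx) add1n subn1 prednK ?expn_gt0.
Qed.

Lemma Tr1_poly_coef1 : (\sum_(i < n) 'X^(2 ^ i) : {poly F})`_1 = 1.
Proof.
rewrite coef_sum; case: n n_gt0 => // m _.
rewrite big_ord_recl coefXn expn0 eqxx big1 ?addr0 // => i _.
by rewrite coefXn lift0 -{1}(expn0 2) eqn_exp2l.
Qed.

Lemma Tr1_surj : exists2 y, y \in Fq & Tr1 n y = 1.
Proof.
pose P : {poly F} := \sum_(i < n) 'X^(2 ^ i).
have P_neq0 : P != 0.
  by apply/eqP => P0; have /eqP := Tr1_poly_coef1; rewrite -/P P0 coef0 eq_sym oner_eq0.
have P_size : (size P <= (2 ^ n.-1).+1)%N.
  apply: (leq_trans (size_sum _ _ _)); apply/bigmax_leqP => i _.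
  by rewrite size_polyXn ltnS leq_exp2l // -ltnS prednK.
have [y /andP[yFq /eqP Ty] | noy] := pickP [pred y | (y \in Fq) && (Tr1 n y == 1)].
  by exists y.
have Froots : all (root P) (enum Fq).
  apply/allP => y; rewrite mem_enum => yFq.
  rewrite /root /P horner_sum (eq_bigr _ (fun i _ => hornerXn y _)).
  rewrite -[\sum_(i < n) _]/(Tr1 n y); have := noy y; rewrite /= yFq.
  by case: (Fq_Tr1_bit yFq) => ->; rewrite ?eqxx.
have := max_poly_roots P_neq0 Froots (enum_uniq _).
rewrite -cardE card_Fq => /leq_trans/(_ P_size).
by case: n n_gt0 => // m _; rewrite /= expnS ltnS leqNgt ltn_Pmull ?expn_gt0.
Qed.

Lemma Tr1_surj_scale c : c \in Fq -> c != 0 -> exists2 t, t \in Fq & Tr1 n (c * t) = 1.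
Proof.
move=> cFq c0; case: Tr1_surj => y yFq Ty.
by exists (c^-1 * y); [rewrite rpredM ?rpredV | rewrite mulVKf].
Qed.

Lemma sum_sgn_Tr1 c : c \in Fq ->
  \sum_(y in Fq) sgnF (Tr1 n (c * y)) = if c == 0 then q%:Z else 0.
Proof.
move=> cFq; have [->|c0] := eqVneq c 0.
  rewrite (eq_bigr (fun _ => 1)) => [|y _]; last by rewrite mul0r Tr10 sgnF0.
  by rewrite sumr_const card_Fq natz.
have [t tFq ct] := Tr1_surj_scale cFq c0.
apply: (sum_involution_opp (s := +%R^~ t)) => [|y|y yFq].
- exact: (addrK_pchar2 pchar2).
- by move=> yFq; rewrite rpredD.
rewrite mulrDr (Tr1D pchar2) ct (sgnFD pchar2) ?sgnF1 ?mulrN1 //; last by right.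
by apply: Fq_Tr1_bit; rewrite rpredM.
Qed.

Lemma sum_sgn_Tr1_double z :
  \sum_(y in Fq) sgnF (Tr1 (2 * n) (z * y)) = if z + z ^+ q == 0 then q%:Z else 0.
Proof.
rewrite -(sum_sgn_Tr1 (Fq_trace z)); apply: eq_bigr => y /eqP yq.
by rewrite (Tr1_double pchar2) exprMn yq mulrDl.
Qed.

Lemma trace_eq0 (z : F) : (z + z ^+ q == 0) = (z == 0) || (z ^+ (q - 1) == 1).
Proof.
rewrite -exprq_pred -{1}[z]mul1r -mulrDl mulf_eq0 addr_eq0 (oppr_pchar2 pchar2).
by rewrite orbC [1 == _]eq_sym.
Qed.

Lemma sum_sgn_fiber w u : u \in circle ->
  \sum_(x | (x != 0) && (x ^+ (q - 1) == u)) sgnF (Tr1 (2 * n) (w * x)) =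
  (if (w == 0) || (w ^+ (q - 1) * u == 1) then q%:Z else 0) - 1.
Proof.
case/circle_Hilbert90 => x0 x00 <-.
rewrite (reindex_inj (mulfI x00)) /= (eq_bigl (mem Fqx)) => [|y]; last exact: fiber_mul.
have := sum_sgn_Tr1_double (w * x0).
rewrite (bigD1 0) ?rpred0 //= mulr0 Tr10 sgnF0 trace_eq0 mulf_eq0.
rewrite (negbTE x00) orbF exprMn => <-.
rewrite addrC addrK; apply: eq_big => [y|y _]; first by rewrite !inE andbC.
by rewrite mulrA.
Qed.

Section CircleFunction.
Variable G : F -> F.
Hypothesis G_bit : forall u, G u = 0 \/ G u = 1.
Local Notation f := (fun x => G (x ^+ (q - 1))).
Local Notation e := (sgnF (G 0)).
Local Notation S := (\sum_(u in circle) sgnF (G u)).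

Lemma walsh_circle_fun w : walsh (2 * n) f w =
  e + \sum_(u in circle) sgnF (G u) *
        ((if (w == 0) || (w ^+ (q - 1) * u == 1) then q%:Z else 0) - 1).
Proof.
rewrite /walsh (bigD1 0) //= mulr0 Tr10 addr0.
have -> : (0 : F) ^+ (q - 1) = 0 by rewrite expr0n subn_eq0 leqNgt q_gt1.
congr (_ + _).
rewrite (partition_big (fun x => x ^+ (q - 1)) (mem circle)) /= => [|x]; last first.
  exact: circle_expr_pred.
apply: eq_bigr => u uU; rewrite -sum_sgn_fiber // mulr_sumr.
apply: eq_bigr => x /andP[_ /eqP xu].
by rewrite xu (sgnFD pchar2) //; apply: Tr1_double_bit.
Qed.

Lemma walsh_circle_fun0 : walsh (2 * n) f 0 = e + S * (q%:Z - 1).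
Proof. by rewrite walsh_circle_fun eqxx mulr_suml. Qed.

Lemma walsh_circle_fun_neq0 w u : w != 0 -> w ^+ (q - 1) * u = 1 ->
  walsh (2 * n) f w = e - S + q%:Z * sgnF (G u).
Proof.
move=> w0 wu; have wq0 : w ^+ (q - 1) != 0 by rewrite expf_neq0.
have uU : u \in circle.
  by rewrite -(mulKf wq0 u) wu mulr1 rpredV ?circle_expr_pred.
rewrite walsh_circle_fun (negbTE w0) /= (bigD1 u) //= wu eqxx (bigD1 u uU) /=.
rewrite (eq_bigr (fun v => - sgnF (G v))) => [|v /andP[_ vu]]; last first.
  by rewrite -wu (inj_eq (mulfI wq0)) (negbTE vu) sub0r mulrN1.
rewrite sumrN; ring.
Qed.

Lemma bent_circle_fun : S = e -> bent (2 * n) f.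
Proof.
move=> Se w; rewrite -cardF card_sqr PoszM -expr2.
have [->|w0] := eqVneq w 0.
  by rewrite walsh_circle_fun0 Se; case: (sgnF_pm (G 0)) => ->; ring.
have wq0 : w ^+ (q - 1) != 0 by rewrite expf_neq0.
rewrite (walsh_circle_fun_neq0 w0 (mulfV wq0)) Se subrr add0r.
by case: (sgnF_pm (G (w ^+ (q - 1))^-1)) => ->; ring.
Qed.

Lemma walsh_circle_fun_sqr u : bent (2 * n) f -> u \in circle ->
  (e - S + q%:Z * sgnF (G u)) ^+ 2 = q%:Z ^+ 2.
Proof.
move=> fbent uU; have [x x0 xu] := circle_Hilbert90 uU.
have x0' : x^-1 != 0 by rewrite invr_neq0.
have xu' : x^-1 ^+ (q - 1) * u = 1 by rewrite exprVn xu mulVf ?circle_neq0.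
by rewrite -(walsh_circle_fun_neq0 x0' xu') fbent -cardF card_sqr PoszM expr2.
Qed.

Lemma bent_circle_fun_sum : bent (2 * n) f ->
  S = e \/ q = 2%N /\ {in circle, forall u, sgnF (G u) = - e}.
Proof.
move=> fbent; have [|Sne] := eqVneq S e; [by left | right].
have q_gt1z : (1 < q%:Z)%R by rewrite ltz_nat q_gt1.
have eS u : u \in circle -> e - S = - (2 * (q%:Z * sgnF (G u))).
  move=> uU; have := walsh_circle_fun_sqr fbent uU.
  have -> : q%:Z ^+ 2 = (q%:Z * sgnF (G u)) ^+ 2.
    by case: (sgnF_pm (G u)) => ->; rewrite ?mulr1 ?mulrN1 ?sqrrN.
  by case/sqrrD_eq_sqr => // /eqP; rewrite subr_eq0 eq_sym (negbTE Sne).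
have sgnG u : u \in circle -> sgnF (G u) = sgnF (G 1).
  move=> uU; have := eS u uU; rewrite (eS 1 (rpred1 _)).
  by case: (sgnF_pm (G u)) => ->; case: (sgnF_pm (G 1)) => ->; lia.
have S_const : S = (q%:Z + 1) * sgnF (G 1).
  by rewrite (eq_bigr _ sgnG) sumr_const card_circle -mulr_natl -addn1 natrD natz.
have [q2 s1] : q%:Z = 2 /\ sgnF (G 1) = - e.
  have := eS 1 (rpred1 _); rewrite S_const.
  by case: (sgnF_pm (G 0)) => ->; case: (sgnF_pm (G 1)) => ->; lia.
by split=> [|u uU]; [apply/eqP; rewrite -eqz_nat q2 | rewrite sgnG].
Qed.

Lemma bent_circle_funE : (2 < q)%N -> bent (2 * n) f <-> S = e.
Proof.
move=> q_gt2; split=> [/bent_circle_fun_sum [// | [q2]] | /bent_circle_fun //].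
by move: q_gt2; rewrite q2.
Qed.

End CircleFunction.

Definition circle_trace_fiber (x : F) : {pred F} :=
  [pred v in circle | (v != 1) && (v + v ^+ q == x)].

Lemma circle_trace_Fqx v : v \in circle -> v != 1 -> v + v ^+ q \in Fqx.
Proof.
move=> vU v1; rewrite inE Fq_trace andbT addr_eq0 (oppr_pchar2 pchar2) eq_sym -memFq.
by apply: contra v1 => vFq; apply/eqP/circle_Fq.
Qed.

Lemma Tr1_inv_circle_trace v : v \in circle -> v != 1 -> Tr1 n (v + v ^+ q)^-1 = 1.
Proof.
move=> vU v1; have v0 := circle_neq0 vU.
have v10 : v + 1 != 0 by rewrite addr_eq0 (oppr_pchar2 pchar2).
have -> : (v + v ^+ q)^-1 = (v + 1)^-1 ^+ 2 + (v + 1)^-1.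
  rewrite (circle_conj vU); apply: (mulfI (expf_neq0 2 v10)).
  have v2 : v * v + 1 != 0 by rewrite -[v * v]expr2 -(expr1n _ 2) -sqrD_pchar2 ?pchar2 ?expf_neq0.
  by field: two_eq0; rewrite v0 v10 v2.
rewrite (Tr1_sqr_addr pchar2) addrC -[_^-1]mul1r.
by have := trace_div_circle (rpred1 _) vU v1; rewrite mul1r.
Qed.

Lemma card_circle_trace_fiber_le x : (#|circle_trace_fiber x| <= 2)%N.
Proof.
have [v0 v0x|/eq_card0 ->] := pickP (circle_trace_fiber x); last by [].
move: v0x => /andP[v0U /andP[_ /eqP <-]].
have v00 := circle_neq0 v0U.
apply: (@leq_trans #|[set v0; v0^-1]|); last by rewrite cards2; case: (_ != _).
apply/subset_leq_card/subsetP => w; rewrite !inE => /andP[wU /andP[_ /eqP]].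
rewrite !circle_conj // => wv0; have w0 := circle_neq0 wU.
have : (w - v0) * (w - v0^-1) = 0.
  have -> : (w - v0) * (w - v0^-1) = w * w - w * (v0 + v0^-1) + v0 * v0^-1 by ring.
  by rewrite -wv0 mulfV // mulrDr mulfV //; ring.
by move/eqP; rewrite mulf_eq0 !subr_eq0.
Qed.

Lemma card_circle_trace_fiber0 x : Tr1 n x^-1 != 1 -> #|circle_trace_fiber x| = 0%N.
Proof.
move=> Tx; apply: eq_card0 => v; rewrite !inE; apply/negP => /andP[vU /andP[v1 /eqP vx]].
by move: Tx; rewrite -vx Tr1_inv_circle_trace ?eqxx.
Qed.

Lemma sum_circle_trace (h : F -> int) :
  \sum_(v in circle | v != 1) h (v + v ^+ q) =
  \sum_(x in Fqx) h x * #|circle_trace_fiber x|%:Z.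
Proof.
rewrite (partition_big (fun v => v + v ^+ q) (mem Fqx)) /= => [|v /andP[]]; last first.
  exact: circle_trace_Fqx.
apply: eq_bigr => x _; rewrite (eq_bigr (fun _ => h x)) => [|v /andP[_ /eqP ->] //].
rewrite sumr_const -mulr_natr natz; congr (_ * _%:Z).
by apply: eq_card => v; rewrite unfold_in /= -andbA.
Qed.

Lemma card_circle1 : #|[pred v in circle | v != 1]| = q.
Proof.
have := cardD1 1 circle; rewrite card_circle rpred1 add1n => -[->].
by apply: eq_card => v; rewrite !inE andbC.
Qed.

Lemma sum_card_circle_trace_fiber : \sum_(x in Fqx) #|circle_trace_fiber x|%:Z = q%:Z.
Proof.
have := sum_circle_trace (fun _ => 1); rewrite sumr_const card_circle1 => qE.
by rewrite -natz qE; apply: eq_bigr => x _; rewrite mul1r.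
Qed.

Lemma sum_sgn_Tr1_Fqx c : c \in Fq -> c != 0 -> \sum_(x in Fqx) sgnF (Tr1 n (c * x)) = -1.
Proof.
move=> cFq c0; have := sum_sgn_Tr1 cFq; rewrite (negbTE c0) (bigD1 0) ?rpred0 //=.
rewrite mulr0 Tr10 sgnF0 => /(canRL (addKr 1)); rewrite addr0 => <-.
by apply: eq_bigl => x; rewrite !inE andbC.
Qed.

Lemma sum_sgn_Tr1_inv : \sum_(x in Fqx) sgnF (Tr1 n x^-1) = -1.
Proof.
rewrite -(sum_sgn_Tr1_Fqx (rpred1 _) (oner_neq0 _)) (reindex_inj invr_inj) /=.
apply: eq_big => [x|x _]; last by rewrite invrK mul1r.
by rewrite !inE invr_eq0 -!memFq rpredV.
Qed.

Lemma card_circle_trace_fiber x : x \in Fqx ->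
  #|circle_trace_fiber x|%:Z = 1 - sgnF (Tr1 n x^-1).
Proof.
(* Both sides are bounded pointwise and have the same total q. *)
have le y : y \in Fqx -> #|circle_trace_fiber y|%:Z <= 1 - sgnF (Tr1 n y^-1).
  move=> /andP[_ yFq]; have yVFq : y^-1 \in Fq by rewrite rpredV.
  case: (Fq_Tr1_bit yVFq) => T; rewrite T.
    by rewrite card_circle_trace_fiber0 ?sgnF0 // T eq_sym oner_eq0.
  by rewrite sgnF1 opprK lez_nat card_circle_trace_fiber_le.
have sum_eq : \sum_(y in Fqx) (1 - sgnF (Tr1 n y^-1) - #|circle_trace_fiber y|%:Z) = 0.
  rewrite !sumrB sum_sgn_Tr1_inv sum_card_circle_trace_fiber sumr_const.
  by rewrite (proj2 card_circle_Fqx) -natz natrB ?expn_gt0 //; lia.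
move=> xFqx; apply/eqP; rewrite eq_sym -subr_eq0; apply/eqP.
by move/psumr_eq0P: sum_eq; apply => // y /le; rewrite subr_ge0.
Qed.

Lemma sum_circle_sgn_Tr1_fiber a : a \in Fq ->
  \sum_(v in circle) sgnF (Tr1 (2 * n) (a * v)) =
  1 + \sum_(x in Fqx) sgnF (Tr1 n (a * x)) * #|circle_trace_fiber x|%:Z.
Proof.
move=> /eqP aq; rewrite (bigD1 1) ?rpred1 //= mulr1 (Tr1_double pchar2) aq.
rewrite (addrr_pchar2 pchar2) Tr10 sgnF0 -sum_circle_trace; congr (_ + _).
by apply: eq_bigr => v _; rewrite (Tr1_double pchar2) exprMn aq mulrDr.
Qed.

Lemma sum_circle_sgn_Tr1 a : a \in Fq -> a != 0 ->
  \sum_(v in circle) sgnF (Tr1 (2 * n) (a * v)) = 1 - kloosterman n a.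
Proof.
move=> aFq a0; rewrite sum_circle_sgn_Tr1_fiber //.
rewrite (eq_bigr (fun x => sgnF (Tr1 n (a * x)) - sgnF (Tr1 n (x^-1 + a * x)))); last first.
  move=> x xFqx; have /andP[_ xFq] := xFqx.
  rewrite card_circle_trace_fiber // mulrBr mulr1 (Tr1D pchar2) (sgnFD pchar2).
  - by rewrite [sgnF (Tr1 n x^-1) * _]mulrC.
  - by apply: Fq_Tr1_bit; rewrite rpredV.
  - by apply: Fq_Tr1_bit; rewrite rpredM.
rewrite sumrB sum_sgn_Tr1_Fqx // /kloosterman [in RHS](bigD1 0) ?expr0n ?expn_eq0 //=.
rewrite invr0 mulr0 addr0 Tr10 sgnF0 [in RHS](eq_bigl (mem Fqx)) => [|x]; last first.
  by rewrite !inE andbC.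
by rewrite opprD addrA subrr add0r.
Qed.

Lemma kloosterman_dvd4 a : (2 < q)%N -> a \in Fq -> a != 0 -> (4 %| kloosterman n a)%Z.
Proof.
move=> q_gt2 aFq a0.
have -> : kloosterman n a =
    - (\sum_(x in Fqx) (sgnF (Tr1 n (a * x)) - 1) * #|circle_trace_fiber x|%:Z + q%:Z).
  have := sum_circle_sgn_Tr1 aFq a0; rewrite sum_circle_sgn_Tr1_fiber // => /addrI.
  move/(congr1 -%R); rewrite opprK => <-; congr (- _).
  by rewrite -sum_card_circle_trace_fiber -big_split /=; apply: eq_bigr => x _; ring.
(* Each fibre has 0 or 2 elements, so each summand is 0 or -4. *)
rewrite rpredN rpredD //.
  apply: rpred_sum => x xFqx; rewrite card_circle_trace_fiber //.
  by case: (sgnF_pm (Tr1 n (a * x))) => ->; case: (sgnF_pm (Tr1 n x^-1)) => ->.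
have n_gt1 : (1 < n)%N by rewrite -(ltn_exp2l _ _ (isT : (1 < 2)%N)).
exact: (dvdn_exp2l 2 n_gt1).
Qed.

Section BentCriterion.
Variables a1 b : F.
Hypotheses (a1Fq : a1 \in Fq) (a1_neq0 : a1 != 0) (b_neq0 : b != 0).
Local Notation G := (fun u => Tr1 (2 * n) (a1 / (u + b))).
Local Notation S := (\sum_(u in circle) sgnF (G u)).

Lemma G_bit u : G u = 0 \/ G u = 1.
Proof. exact: Tr1_double_bit. Qed.

Lemma sgnG_b : sgnF (G b) = 1.
Proof. by rewrite /= (addrr_pchar2 pchar2) invr0 mulr0 Tr10 sgnF0. Qed.

Lemma not_bent_one : ~ bent (2 * n) (fun x => Tr1 (2 * n) (a1 / (x ^+ (q - 1) + 1))).
Proof.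
have G1 : sgnF (Tr1 (2 * n) (a1 / (1 + 1))) = 1.
  by rewrite (addrr_pchar2 pchar2) invr0 mulr0 Tr10 sgnF0.
have G0 : sgnF (Tr1 (2 * n) (a1 / (0 + 1))) = 1.
  by rewrite add0r invr1 mulr1 (Tr1_double pchar2) (eqP a1Fq) (addrr_pchar2 pchar2) Tr10 sgnF0.
have Gu u : u \in circle -> u != 1 -> Tr1 (2 * n) (a1 / (u + 1)) = Tr1 n a1.
  move=> uU u1; rewrite (Tr1_double pchar2) exprMn (eqP a1Fq) -mulrDr.
  by have := trace_div_circle (rpred1 _) uU u1; rewrite mul1r => ->; rewrite mulr1.
case/(bent_circle_fun_sum (fun u => Tr1_double_bit (a1 / (u + 1)))); last first.
  by case=> _ /(_ 1 (rpred1 _)); rewrite G0 G1.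
rewrite G0 (bigD1 1) ?rpred1 //= G1 (eq_bigr (fun=> sgnF (Tr1 n a1))); last first.
  by move=> u /andP[uU u1]; rewrite Gu.
rewrite sumr_const card_circle1 -[RHS]addr0 => /addrI /eqP.
by rewrite mulrn_eq0 expn_eq0 /=; case: (sgnF_pm (Tr1 n a1)) => ->.
Qed.

Section OnCircle.
Hypotheses (bU : b \in circle) (b_neq1 : b != 1).

Lemma sum_sgn_circle_off_b : \sum_(u in circle | u != b) sgnF (G u) = 0.
Proof.
have /andP[b_trace0 b_traceFq] := circle_trace_Fqx bU b_neq1.
have [t tFq ct] := Tr1_surj_scale (rpredM a1Fq b_traceFq) (mulf_neq0 a1_neq0 b_trace0).
pose d := t / b; have b0 := circle_neq0 bU.
have bdFq : b * d \in Fq by rewrite /d mulrC divfK.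
have Tr_a1d : Tr1 (2 * n) (a1 * d) = 1.
  rewrite (Tr1_double pchar2) -ct exprMn (eqP a1Fq) /d exprMn (eqP tFq) exprVn.
  by rewrite (circle_conj bU) invrK; congr (Tr1 n _); field.
(* s permutes U \ {b} and, as Tr (a1 d) = 1, changes the sign of (-1)^G. *)
pose s u := ((u + b)^-1 + d)^-1 + b.
apply: (@sum_involution_opp _ [pred u in circle | u != b] s (fun u => sgnF (G u)))
  => [u | u | u].
- by rewrite /s /= !(addrK_pchar2 pchar2, invrK).
- move=> /andP[uU ub].
  have line : b * ((u + b)^-1 + d) + (b * ((u + b)^-1 + d)) ^+ q = 1.
    by rewrite mulrDr conjD addrACA (eqP bdFq) (addrr_pchar2 pchar2) addr0 trace_div_circle.
  rewrite inE /s /= trace1_inv_circle //= -[X in _ != X]add0r (inj_eq (addIr b)) invr_eq0.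
  by apply: contra_eq_neq line => ->; rewrite mulr0 expr0n expn_eq0 add0r eq_sym oner_eq0.
- move=> _; rewrite /s /= (addrK_pchar2 pchar2) invrK mulrDr (Tr1D pchar2) Tr_a1d.
  by rewrite (sgnFD pchar2) ?sgnF1 ?mulrN1 //; [apply: Tr1_double_bit | right].
Qed.

Lemma bent_on_circle :
  bent (2 * n) (fun x => Tr1 (2 * n) (a1 / (x ^+ (q - 1) + b))) <-> Tr1 (2 * n) (a1 / b) = 0.
Proof.
have S1 : S = 1 by rewrite (bigD1 b) //= sgnG_b sum_sgn_circle_off_b addr0.
split=> [|T0]; last by apply: (bent_circle_fun G_bit); rewrite S1 /= add0r T0 sgnF0.
case/(bent_circle_fun_sum G_bit) => [|[_ sgnU]].
  by rewrite S1 /= add0r => /esym/eqP; rewrite sgnF_eq1 => /eqP.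
move: S1; rewrite (eq_bigr (fun=> 1)) => [|u uU]; last first.
  by rewrite sgnU // -(sgnU b bU) sgnG_b.
by rewrite sumr_const card_circle natz; have := q_gt1; lia.
Qed.

End OnCircle.

Section OffCircle.
Hypothesis bNU : b \notin circle.
Local Notation bq := (b ^+ q).
Local Notation M := (1 + b * b ^+ q).
Local Notation a := (a1 / (1 + b * b ^+ q)).

Lemma norm_add1_neq0 : M != 0.
Proof.
rewrite addr_eq0 (oppr_pchar2 pchar2) eq_sym; apply: contra bNU => /eqP nb.
by rewrite mem_circle exprSr mulrC nb.
Qed.

Lemma norm_add1_Fq : M \in Fq.
Proof. by rewrite rpredD ?rpred1 ?Fq_norm. Qed.

Lemma a_Fq : a \in Fq.
Proof. by rewrite rpredM ?rpredV ?norm_add1_Fq. Qed.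

Lemma a_neq0 : a != 0.
Proof. by rewrite mulf_neq0 ?invr_eq0 ?norm_add1_neq0. Qed.

Lemma q_gt2 : (2 < q)%N.
Proof.
(* For q = 2 the norm b * bq is a nonzero element of F_2, hence 1. *)
rewrite ltn_neqAle q_gt1 andbT; apply: contra bNU => /eqP q2.
move: (Fq_norm b); rewrite memFq mem_circle -q2 => /eqP nb.
have [|nb1] := sqrf_eq_id nb; last by rewrite exprSr mulrC nb1.
by move/eqP; rewrite mulf_eq0 expf_eq0 (negbTE b_neq0) andbF.
Qed.

Definition moebius v := M / (v + bq) + b.

Lemma moebius_inj : injective moebius.
Proof. by move=> v w /addIr /(mulfI norm_add1_neq0) /invr_inj /addIr. Qed.

Lemma moebius_circle v : (moebius v \in circle) = (v \in circle).
Proof.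
have [vbq|vbq0] := eqVneq (v + bq) 0.
  have -> : v = bq by apply/eqP; rewrite -(oppr_pchar2 pchar2 bq) -addr_eq0 vbq.
  by rewrite /moebius (addrr_pchar2 pchar2) invr0 mulr0 add0r circle_conjq.
have vqb0 : v ^+ q + b != 0 by rewrite -[b]conjK -conjD expf_neq0.
have char2D (x y : F) : x + y = x - y by rewrite (oppr_pchar2 pchar2).
rewrite !mem_circle !exprSr /moebius conjD exprMn exprVn (eqP norm_add1_Fq) conjD conjK.
(* Turn sums into differences to use the characteristic-free identity. *)
rewrite -subr_eq0 -[X in _ = X]subr_eq0 [1 + _]addrC !(char2D _ 1).
rewrite [v ^+ q + b]char2D [v + bq]char2D in vqb0 vbq0 *.
rewrite moebius_norm_sub1 // !mulf_eq0 invr_eq0 !mulf_eq0 (negbTE vbq0) (negbTE vqb0) orbF.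
by rewrite -(char2D (b * bq)) addrC (negbTE norm_add1_neq0) orbF.
Qed.

Lemma sum_sgn_circle_kloosterman : S = sgnF (Tr1 (2 * n) (a * bq)) * (1 - kloosterman n a).
Proof.
rewrite -(sum_circle_sgn_Tr1 a_Fq a_neq0) mulr_sumr (reindex_inj moebius_inj) /=.
apply: eq_big => [v | v]; first exact: moebius_circle.
rewrite moebius_circle => vU.
have vbq0 : v + bq != 0.
  by rewrite addr_eq0 (oppr_pchar2 pchar2); apply: contraTneq vU => ->; rewrite circle_conjq.
rewrite /moebius (addrK_pchar2 pchar2).
have -> : a1 / (M / (v + bq)) = a * v + a * bq by field; rewrite vbq0 norm_add1_neq0.
rewrite (Tr1D pchar2) (sgnFD pchar2); [exact: mulrC | exact: Tr1_double_bit..].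
Qed.

Lemma Tr1_div_off_circle :
  Tr1 (2 * n) (a1 / b) = Tr1 (2 * n) (a * bq) + Tr1 n (a1 * (b + bq) / (M * (b * bq))).
Proof.
rewrite !(Tr1_double pchar2) -(Tr1D pchar2); congr (Tr1 n _).
rewrite !exprMn !exprVn (eqP a1Fq) (eqP norm_add1_Fq) conjK.
by field; rewrite b_neq0 expf_neq0 ?norm_add1_neq0.
Qed.

Lemma bent_off_circle :
  bent (2 * n) (fun x => Tr1 (2 * n) (a1 / (x ^+ (q - 1) + b))) <->
  kloosterman n a = 0 /\ Tr1 n (a1 * (b + bq) / (M * (b * bq))) = 0.
Proof.
set t := Tr1 n (a1 * (b + bq) / (M * (b * bq))).
have t_bit : t = 0 \/ t = 1.
  apply: Fq_Tr1_bit; apply: rpredM; first exact: rpredM (Fq_trace b).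
  by rewrite rpredV rpredM ?norm_add1_Fq ?Fq_norm.
have s_neq0 : sgnF (Tr1 (2 * n) (a * bq)) != 0.
  by case: (sgnF_pm (Tr1 (2 * n) (a * bq))) => ->.
rewrite (bent_circle_funE G_bit q_gt2) sum_sgn_circle_kloosterman /= add0r Tr1_div_off_circle -/t.
rewrite (sgnFD pchar2 (Tr1_double_bit _) t_bit).
split=> [/(mulfI s_neq0) | [K0 t0]]; last by rewrite K0 t0 subr0 sgnF0.
have /dvdzP[k ->] := kloosterman_dvd4 q_gt2 a_Fq a_neq0.
case: t_bit => ->; rewrite ?sgnF0 ?sgnF1 => E; last by exfalso; lia.
by split=> //; lia.
Qed.

End OffCircle.

End BentCriterion.

End QuadraticExtension.

Theorem theorem1 (n : nat) (F : finFieldType) (a1 b : F) :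
  (0 < n)%N ->
  #|F| = (2 ^ (2 * n))%N ->
  a1 ^+ (2 ^ n) = a1 -> a1 != 0 ->
  b != 0 ->
  bent (2 * n) (fun x : F => Tr1 (2 * n) (a1 / (x ^+ (2 ^ n - 1) + b)))
  <->
  ((b ^+ (2 ^ n + 1) = 1 /\ b != 1 /\ Tr1 (2 * n) (a1 / b) = 0)
   \/
   (b ^+ (2 ^ n + 1) != 1 /\
    kloosterman n (a1 / (1 + b * b ^+ (2 ^ n))) = 0 /\
    Tr1 n (a1 * (b + b ^+ (2 ^ n)) /
           ((1 + b * b ^+ (2 ^ n)) * (b * b ^+ (2 ^ n)))) = 0)).
Proof.
move=> n_gt0 cardF a1q a1_neq0 b_neq0.
have a1Fq : a1 \in Fq n by rewrite memFq a1q.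
rewrite addn1; have [bU|bNU] := boolP (b \in circle n); last first.
  have bNU1 : b ^+ (2 ^ n).+1 != 1 := bNU.
  rewrite bent_off_circle //; split=> [KT | [[bU1 _] | [_ KT]] //]; first by right.
  by rewrite bU1 eqxx in bNU1.
have bU1 : b ^+ (2 ^ n).+1 = 1 by apply/eqP.
have [->|b_neq1] := eqVneq b 1.
  split=> [/(not_bent_one n_gt0 cardF a1Fq) // | [[_ []] | [b1 _]] //].
  by rewrite expr1n eqxx in b1.
rewrite bent_on_circle //; split=> [T0 | [[_ [_ T0]] | [bNU1 _]]] //; first by left.
by rewrite bU1 eqxx in bNU1.
Qed.
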